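(* Let $L\geq 1$ be an integer, $P\geq 0$, and $p_B\in[0,1]$. Let $\beta_1,\ldots,\beta_L$ be i.i.d. random variables with $\mathbb{P}(\beta_l=0)=p_B$, $\mathbb{P}(\beta_l=1)=1-p_B$, and let $\theta_1,\ldots,\theta_L$ be i.i.d. $\mathrm{Uniform}(0,2\pi)$ random variables independent of $\boldsymbol{\beta}=(\beta_1,\ldots,\beta_L)$. Set $h_l=\beta_l e^{j\theta_l}$, $\mathbf{h}=[h_1,\ldots,h_L]^{\mathsf T}$, and $\alpha=\sum_{l=1}^L\beta_l$ (so $\alpha\sim\mathrm{Binomial}(L,1-p_B)$). Let $\mathcal{Q}$ be the set of functions $\mathbf{Q}$ mapping each $\mathbf{b}\in\{0,1\}^L$ to a complex Hermitian positive semidefinite $L\times L$ matrix $\mathbf{Q}(\mathbf{b})$ with $[\mathbf{Q}(\mathbf{b})]_{l,l}\leq P$ for all $l\in\{1,\ldots,L\}$. Then $$\sup_{\mathbf{Q}\in\mathcal{Q}}\mathbb{E}\big[\log(1+\mathbf{h}^{\mathsf H}\mathbf{Q}(\boldsymbol{\beta})\mathbf{h})\big]=\mathbb{E}[\log(1+\alpha P)].$$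
   Context: This quantity is the ergodic capacity of a multi-point intermittent block fading channel $y=\sum_{l}h_l x_l+z$ with unit-variance complex Gaussian noise, perfect channel knowledge at the receiver, knowledge of the blockage state $\boldsymbol{\beta}$ at the transmitters, and per-transmitter power constraint $P$. Here $\beta_l$ has the stationary distribution of a binary Markov blockage chain, with $p_B$ the blockage probability. $\log$ is the logarithm in a fixed base (e.g. base 2); $\mathbf{h}^{\mathsf H}$ is the conjugate transpose. *)

From HB Require Import structures.
From mathcomp Require Import all_boot all_order all_algebra.
From mathcomp Require Import sesquilinear.
From mathcomp Require Import all_classical all_reals all_analysis.
From mathcomp Require Import complex.

Set Implicit Arguments.
Unset Strict Implicit.
Unset Printing Implicit Defensive.

Import Order.TTheory GRing.Theory Num.Theory.
Local Open Scope ring_scope.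
Local Open Scope classical_set_scope.
Local Open Scope complex_scope.

Section Channel.
Variable R : realType.
Variable L : nat.

(* blockage states b in {0,1}^L, encoded as boolean functions (true = 1) *)
Definition bstate := {ffun 'I_L -> bool}.

Definition prob_beta (pB : R) (b : bstate) : R :=
  \prod_(l < L) (if b l then 1 - pB else pB).

Definition hvec (b : bstate) (th : nat -> R) : 'cV[R[i]]_L :=
  \col_(l < L) (if b l then (cos (th l) +i* sin (th l)) else 0).

Definition quadform (Q : 'M[R[i]]_L) (h : 'cV[R[i]]_L) : R[i] :=
  ((map_mx conjc h)^T *m Q *m h) 0 0.

Definition psd (Q : 'M[R[i]]_L) : Prop :=
  Q \is hermsymmx /\
  forall v : 'cV[R[i]]_L, 0 <= ((map_mx conjc v)^T *m Q *m v) 0 0.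

Definition admissible (P : R) (Q : bstate -> 'M[R[i]]_L) : Prop :=
  forall b : bstate, psd (Q b) /\ forall l : 'I_L, Q b l l <= P%:C.

(* Expectation over theta_1..theta_n i.i.d. Uniform(0, 2 pi):
   iterated Lebesgue integral, normalised by 1/(2 pi) in each coordinate. *)
Fixpoint unif_avg (n : nat) (f : (nat -> R) -> R) : R :=
  match n with
  | O => f (fun _ => 0)
  | n'.+1 => (2 * pi)^-1 *
      Rintegral (@lebesgue_measure R) `[0, 2 * pi]%classic
        (fun x : R => unif_avg n' (fun t => f (fun k => if k == n' then x else t k)))
  end.

(* E[ log(1 + h^H Q(beta) h) ]  (natural log; the base only rescales both sides) *)
Definition ergodic_rate (pB : R) (Q : bstate -> 'M[R[i]]_L) : R :=
  \sum_(b : bstate) prob_beta pB b *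
     unif_avg L (fun th => ln (1 + complex.Re (quadform (Q b) (hvec b th)))).

Definition rhs_rate (pB P : R) : R :=
  \sum_(b : bstate) prob_beta pB b * ln (1 + (\sum_(l < L) (b l : nat))%:R * P).

End Channel.

From HB Require Import structures.
From mathcomp Require Import all_boot all_order all_algebra.
From mathcomp Require Import sesquilinear.
From mathcomp Require Import all_classical all_reals all_analysis.
From mathcomp Require Import complex.
From mathcomp Require Import ring lra.

Set Implicit Arguments.
Unset Strict Implicit.
Unset Printing Implicit Defensive.

Import Order.TTheory GRing.Theory Num.Theory.
Import numFieldNormedType.Exports.
Local Open Scope ring_scope.
Local Open Scope classical_set_scope.

(* For a fixed blockage state [b], averaging over the phases kills the cross
   terms [conj h_i Q_ij h_j] (the means of [cos] and [sin] over a period vanish)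
   and leaves [sum_l b_l Q_ll <= alpha P].  Since [ln (1 + .)] is concave, its
   tangent at [alpha P] bounds [E ln (1 + h^H Q h)] by [ln (1 + alpha P)], and
   [Q = P I] attains the bound because then [h^H Q h = alpha P] for all phases.
   The inner iterated averages are not known to be measurable, so the upper
   bound is only ever integrated in the form of a finite sum of products of
   continuous one-variable functions, whose iterated mean factorizes. *)

Lemma sup_attained (R : realType) (S : set R) (x : R) :
  S x -> ubound S x -> sup S = x.
Proof.
move=> Sx ubx; apply/le_anti/andP; split; first by apply: ge_sup => //; exists x.
by apply: sup_upper_bound => //; split; [exists x | exists x].
Qed.

Lemma ln1D_le_tangent (R : realType) (a X : R) : -1 < a -> -1 < X ->
  ln (1 + X) <= ln (1 + a) + (X - a) / (1 + a).
Proof.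
move=> a1 X1.
have a1' : 0 < 1 + a by lra.
have y1 : -1 < (X - a) / (1 + a) by rewrite ltr_pdivlMr // mulN1r; lra.
have -> : 1 + X = (1 + a) * (1 + (X - a) / (1 + a)) by field; rewrite gt_eqF.
by rewrite lnM ?posrE ?lerD2l ?le_ln1Dx //; lra.
Qed.

Section NonnegativeIntegral.
Context d (T : measurableType d) (R : realType).
Variable mu : {measure set T -> \bar R}.
Local Open Scope ereal_scope.

Lemma ge0_le_integral_nonmeasurable (D : set T) (f1 f2 : T -> \bar R) :
  (forall x, D x -> 0 <= f1 x) -> (forall x, D x -> f1 x <= f2 x) ->
  \int[mu]_(x in D) f1 x <= \int[mu]_(x in D) f2 x.
Proof.
move=> f10 f12.
have f20 x : D x -> 0 <= f2 x by move=> Dx; exact: le_trans (f10 _ Dx) (f12 _ Dx).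
rewrite !ge0_integralE//; apply: ereal_sup_le => _ [h hf1 <-]; exists h => //= x.
apply: le_trans (hf1 x) _; rewrite /patch; case: ifP => // /[1!inE].
exact: f12.
Qed.

End NonnegativeIntegral.

Section CircleMean.
Variable R : realType.
Local Notation mu := (@lebesgue_measure R).

Definition period : set R := `[0, 2 * pi]%classic.

Definition circ_mean (g : R -> R) : R := (2 * pi)^-1 * Rintegral mu period g.

Lemma two_pi_gt0 : 0 < 2 * pi :> R.
Proof. by rewrite mulr_gt0 ?pi_gt0. Qed.

Lemma measurable_period : measurable period.
Proof. exact: measurable_itv. Qed.

Lemma continuous_integrable_period (g : R -> R) :
  continuous g -> mu.-integrable period (EFin \o g).
Proof.
move=> cg; apply: continuous_compact_integrable; first exact: segment_compact.
exact: continuous_subspaceT.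
Qed.

Lemma lebesgue_measure_period : fine (mu period) = 2 * pi.
Proof. by rewrite /period lebesgue_measure_itv/= lte_fin two_pi_gt0 /= subr0. Qed.

Lemma circ_mean_cst (c : R) : circ_mean (fun=> c) = c.
Proof.
rewrite /circ_mean Rintegral_cst ?lebesgue_measure_period; last exact: measurable_period.
by rewrite mulrCA mulVf ?mulr1 // gt_eqF // two_pi_gt0.
Qed.

Lemma circ_mean_ge0 (g : R -> R) : (forall x, 0 <= g x) -> 0 <= circ_mean g.
Proof.
move=> g0; rewrite /circ_mean mulr_ge0 ?invr_ge0 ?(ltW two_pi_gt0) //.
by apply: fine_ge0; apply: integral_ge0 => x _; rewrite lee_fin.
Qed.

Lemma le_circ_mean (g h : R -> R) : continuous h ->
  (forall x, 0 <= g x) -> (forall x, g x <= h x) -> circ_mean g <= circ_mean h.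
Proof.
move=> ch g0 gh; rewrite /circ_mean ler_pM2l ?invr_gt0 ?two_pi_gt0 //.
have ge0_g : (0 <= \int[mu]_(x in period) (g x)%:E)%E.
  by apply: integral_ge0 => x _; rewrite lee_fin.
have le_gh : (\int[mu]_(x in period) (g x)%:E <= \int[mu]_(x in period) (h x)%:E)%E.
  by apply: ge0_le_integral_nonmeasurable => x _; rewrite lee_fin.
have fin_h : (\int[mu]_(x in period) (h x)%:E)%E \is a fin_num.
  apply: integrable_fin_num; first exact: measurable_period.
  exact: continuous_integrable_period.
apply: fine_le => //; rewrite ge0_fin_numE //.
apply: (le_lt_trans le_gh); rewrite -ge0_fin_numE //; exact: le_trans ge0_g le_gh.
Qed.

Lemma continuous_mulr (c : R) (g : R -> R) :
  continuous g -> continuous (fun x => c * g x).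
Proof. by move=> cg x; apply: continuousM; [exact: cst_continuous | exact: cg]. Qed.

Lemma circ_mean_sum (I : Type) (r : seq I) (c : I -> R) (F : I -> R -> R) :
  (forall i, continuous (F i)) ->
  circ_mean (fun x => \sum_(i <- r) c i * F i x) = \sum_(i <- r) c i * circ_mean (F i).
Proof.
move=> cF; have cF' i : continuous (fun x => c i * F i x) by exact: continuous_mulr.
elim: r => [|i r IH]; first by under eq_fun do rewrite big_nil; rewrite circ_mean_cst big_nil.
under eq_fun do rewrite big_cons.
have csum : continuous (fun x => \sum_(j <- r) c j * F j x).
  by apply: (continuous_big add_continuous) => j _; exact: cF'.
rewrite big_cons -IH /circ_mean RintegralD;
  try exact: measurable_period; try exact: continuous_integrable_period.
rewrite RintegralZl; [|exact: measurable_period | exact: continuous_integrable_period].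
by rewrite mulrDr mulrCA.
Qed.

Lemma circ_mean_cos : circ_mean cos = 0.
Proof.
rewrite /circ_mean /Rintegral /period (@continuous_FTC2 _ _ sin) ?two_pi_gt0//.
- by rewrite mulr_natl sin2pi sin0 subee //= mulr0.
- exact/continuous_subspaceT/continuous_cos.
- split; first by move=> x _; exact: derivable_sin.
  + by apply: cvg_at_right_filter; exact: continuous_sin.
  + by apply: cvg_at_left_filter; exact: continuous_sin.
- by move=> x _; rewrite derive1E derive_val.
Qed.

Lemma circ_mean_sin : circ_mean sin = 0.
Proof.
rewrite /circ_mean /Rintegral /period (@continuous_FTC2 _ _ (- cos)) ?two_pi_gt0//.
- by rewrite mulr_natl /= !fctE cos2pi cos0 subrr mulr0.
- exact/continuous_subspaceT/continuous_sin.
- split; first by move=> x _; exact/derivableN/derivable_cos.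
  + by apply: cvgN; apply: cvg_at_right_filter; exact: continuous_cos.
  + by apply: cvgN; apply: cvg_at_left_filter; exact: continuous_cos.
- by move=> x _; rewrite derive1E deriveN // derive_val opprK.
Qed.

Lemma unif_avgS n (f : (nat -> R) -> R) :
  unif_avg n.+1 f =
  circ_mean (fun x => unif_avg n (fun t => f (fun k => if k == n then x else t k))).
Proof. by []. Qed.

Lemma unif_avg_ge0 n (f : (nat -> R) -> R) : (forall t, 0 <= f t) -> 0 <= unif_avg n f.
Proof. by elim: n f => [|n IH] f f0 //=; apply: circ_mean_ge0 => x; exact: IH. Qed.

Lemma unif_avg_cst n (c : R) : unif_avg n (fun=> c) = c.
Proof. by elim: n => [//|n IH]; rewrite unif_avgS IH circ_mean_cst. Qed.

End CircleMean.

Section SeparableSum.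
Variables (R : realType) (M : nat).

Record sep_term := SepTerm {
  coef : R;
  factor : nat -> R -> R;
  factor_continuous : forall k, continuous (factor k) }.

Definition term_value (p : sep_term) (t : nat -> R) : R :=
  coef p * \prod_(k < M) factor p k (t k).

Definition sepsum (s : seq sep_term) (t : nat -> R) : R :=
  \sum_(p <- s) term_value p t.

(* The closed form of [unif_avg n (term_value p)]: coordinates below [n] are
   averaged, the others are frozen at 0. *)
Definition partial_mean (n : nat) (p : sep_term) : R :=
  coef p * \prod_(k < M) if (k < n)%N then circ_mean (factor p k) else factor p k 0.

Definition term_mean (p : sep_term) : R :=
  coef p * \prod_(k < M) circ_mean (factor p k).

Definition fix_coord (n : nat) (x : R) (p : sep_term) : sep_term.
Proof.
refine (@SepTerm (coef p) (fun k => if k == n then fun=> factor p n x else factor p k) _).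
by move=> k; case: eqP => _; [exact: cst_continuous | exact: factor_continuous].
Defined.

Lemma sepsum_fix_coord n x s t :
  sepsum s (fun k => if k == n then x else t k) = sepsum (map (fix_coord n x) s) t.
Proof.
rewrite /sepsum big_map; apply: eq_bigr => p _; congr (_ * _).
by apply: eq_bigr => k _ /=; case: eqP => // ->.
Qed.

Definition mean_except (n : nat) (p : sep_term) : R :=
  \prod_(k < M | k != n :> nat) if (k < n)%N then circ_mean (factor p k) else factor p k 0.

Lemma partial_mean_fix_coord n x p (nM : (n < M)%N) :
  partial_mean n (fix_coord n x p) = coef p * mean_except n p * factor p n x.
Proof.
rewrite /partial_mean (bigD1 (Ordinal nM)) //= eqxx ltnn -mulrA [_ * factor p n x]mulrC.
do 2 congr (_ * _); rewrite /mean_except; apply: eq_big => [k | k]; first by rewrite -val_eqE.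
by move=> kn; have /negPf -> : (k : nat) != n by [].
Qed.

Lemma partial_meanS n p (nM : (n < M)%N) :
  partial_mean n.+1 p = coef p * mean_except n p * circ_mean (factor p n).
Proof.
rewrite /partial_mean (bigD1 (Ordinal nM)) //= ltnSn -mulrA [_ * circ_mean _]mulrC.
do 2 congr (_ * _); rewrite /mean_except; apply: eq_big => [k | k]; first by rewrite -val_eqE.
by move=> kn; rewrite ltnS leq_eqVlt; have /negPf -> : (k : nat) != n by [].
Qed.

Lemma unif_avg_le_partial_mean n (f : (nat -> R) -> R) s : (n <= M)%N ->
  (forall t, 0 <= f t) -> (forall t, f t <= sepsum s t) ->
  unif_avg n f <= \sum_(p <- s) partial_mean n p.
Proof.
elim: n f s => [|n IH] f s nM f0 fs.
  suff -> : \sum_(p <- s) partial_mean 0 p = sepsum s (fun=> 0) by exact: fs.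
  by apply: eq_bigr => p _; congr (_ * _); apply: eq_bigr => k _; rewrite ltn0.
have {}nM : (n < M)%N by [].
rewrite unif_avgS.
under eq_bigr do rewrite partial_meanS //.
rewrite -circ_mean_sum; last by move=> p; exact: factor_continuous.
apply: le_circ_mean => [|x|x].
- apply: (continuous_big add_continuous) => p _.
  exact/continuous_mulr/factor_continuous.
- by apply: unif_avg_ge0 => t; exact: f0.
- under eq_bigr do rewrite -(partial_mean_fix_coord x _ nM).
  rewrite -(big_map (fix_coord n x) xpredT); apply: IH; first exact: ltnW.
    by move=> t; exact: f0.
  by move=> t; rewrite -sepsum_fix_coord; exact: fs.
Qed.

Lemma unif_avg_le_term_mean (f : (nat -> R) -> R) s :
  (forall t, 0 <= f t) -> (forall t, f t <= sepsum s t) ->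
  unif_avg M f <= \sum_(p <- s) term_mean p.
Proof.
move=> f0 fs; apply: le_trans (unif_avg_le_partial_mean (leqnn M) f0 fs) _.
by apply/ler_sum => p _; rewrite /partial_mean; under eq_bigr do rewrite ltn_ord.
Qed.

Definition const_term (c : R) : sep_term :=
  @SepTerm c (fun _ _ => 1) (fun _ => @cst_continuous R R 1).

Lemma term_value_const c t : term_value (const_term c) t = c.
Proof. by rewrite /term_value big1 ?mulr1. Qed.

Lemma term_mean_const c : term_mean (const_term c) = c.
Proof. by rewrite /term_mean big1 ?mulr1 // => k _; exact: circ_mean_cst. Qed.

Definition scale_term (w : R) (p : sep_term) : sep_term :=
  @SepTerm (w * coef p) (factor p) (@factor_continuous p).

Lemma term_value_scale w p t : term_value (scale_term w p) t = w * term_value p t.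
Proof. by rewrite /term_value mulrA. Qed.

Lemma term_mean_scale w p : term_mean (scale_term w p) = w * term_mean p.
Proof. by rewrite /term_mean mulrA. Qed.

End SeparableSum.

Section Channel.
Variables (R : realType) (L : nat).
Local Open Scope complex_scope.

Lemma Re_quadformE (Q : 'M[R[i]]_L) (h : 'cV[R[i]]_L) :
  complex.Re (quadform Q h) =
  \sum_(j < L) \sum_(i < L) complex.Re ((h i 0)^* * Q i j * h j 0).
Proof.
rewrite /quadform mxE raddf_sum; apply: eq_bigr => j _.
by rewrite mxE mulr_suml raddf_sum; apply: eq_bigr => i _; rewrite !mxE.
Qed.

Lemma Re_conj_mul (c s c' s' : R) (q : R[i]) :
  complex.Re ((c +i* s)^* * q * (c' +i* s')) =
  complex.Re q * (c * c' + s * s') - complex.Im q * (c * s' - s * c').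
Proof. by case: q => x y /=; ring. Qed.

Lemma Re_hvec_diag (b : bstate L) (t : nat -> R) (q : R[i]) (i : 'I_L) :
  complex.Re ((hvec b t i 0)^* * q * hvec b t i 0) = (b i)%:R * complex.Re q.
Proof.
rewrite /hvec !mxE; case: (b i) => /=; last by rewrite mulr0 raddf0 mul0r.
by rewrite Re_conj_mul -!expr2 cos2Dsin2; ring.
Qed.

Definition pair_term (i j : nat) (c : R) (u v : R -> R)
    (cu : continuous u) (cv : continuous v) : sep_term R.
Proof.
refine (@SepTerm R c (fun k => if k == i then u else if k == j then v else fun=> 1) _).
by move=> k; case: eqP => _ //; case: eqP => _ //; exact: cst_continuous.
Defined.

Lemma term_value_pair (i j : 'I_L) c u v (cu : continuous u) (cv : continuous v) t :
  i != j -> term_value L (pair_term i j c cu cv) t = c * (u (t i) * v (t j)).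
Proof.
move=> ij; rewrite /term_value (bigD1 i) //= eqxx (bigD1 j) 1?eq_sym //=.
rewrite ifN_eq // eqxx big1 ?mulr1 // => k /andP[ki kj].
by rewrite ifN_eq // ifN_eq.
Qed.

Lemma term_mean_pair (i j : 'I_L) c u v (cu : continuous u) (cv : continuous v) :
  circ_mean u = 0 -> term_mean L (pair_term i j c cu cv) = 0.
Proof. by move=> u0; rewrite /term_mean (bigD1 i) //= eqxx u0 mul0r mulr0. Qed.

Variables (b : bstate L) (Q : 'M[R[i]]_L).

(* [conj e^(ix) * e^(iy) = (cos x cos y + sin x sin y) + i (cos x sin y - sin x cos y)] *)
Definition entry_terms (i j : 'I_L) : seq (sep_term R) :=
  let w := (b i)%:R * (b j)%:R in
  if i == j then [:: const_term ((b i)%:R * complex.Re (Q i i))] else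
  [:: pair_term i j (w * complex.Re (Q i j)) (@continuous_cos R) (@continuous_cos R);
      pair_term i j (w * complex.Re (Q i j)) (@continuous_sin R) (@continuous_sin R);
      pair_term i j (- (w * complex.Im (Q i j))) (@continuous_cos R) (@continuous_sin R);
      pair_term i j (w * complex.Im (Q i j)) (@continuous_sin R) (@continuous_cos R)].

Lemma sepsum_entry_terms i j t :
  sepsum L (entry_terms i j) t = complex.Re ((hvec b t i 0)^* * Q i j * hvec b t j 0).
Proof.
rewrite /sepsum /entry_terms; case: eqVneq => [<-|ij].
  by rewrite big_seq1 term_value_const Re_hvec_diag.
rewrite !big_cons big_nil !term_value_pair // /hvec !mxE.
by case: (b i); case: (b j); rewrite /= ?Re_conj_mul; case: (Q i j) => x y /=; ring.
Qed.

Lemma term_mean_entry_terms i j :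
  \sum_(p <- entry_terms i j) term_mean L p =
  if i == j then (b i)%:R * complex.Re (Q i i) else 0.
Proof.
rewrite /entry_terms; case: eqVneq => _; first by rewrite big_seq1 term_mean_const.
by rewrite !big_cons big_nil !term_mean_pair ?circ_mean_cos ?circ_mean_sin ?addr0.
Qed.

Definition quad_terms : seq (sep_term R) :=
  flatten [seq entry_terms i j | j <- index_enum 'I_L, i <- index_enum 'I_L].

Lemma sepsum_quad_terms t : sepsum L quad_terms t = complex.Re (quadform Q (hvec b t)).
Proof.
rewrite /sepsum big_flatten big_allpairs_dep Re_quadformE.
by apply: eq_bigr => j _; apply: eq_bigr => i _; exact: sepsum_entry_terms.
Qed.

Lemma term_mean_quad_terms :
  \sum_(p <- quad_terms) term_mean L p = \sum_(i < L) (b i)%:R * complex.Re (Q i i).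
Proof.
rewrite big_flatten big_allpairs_dep; apply: eq_bigr => j _.
under eq_bigr do rewrite term_mean_entry_terms.
by rewrite -big_mkcond big_pred1_eq.
Qed.

End Channel.

Section Capacity.
Variables (R : realType) (L : nat).
Local Open Scope complex_scope.

Lemma psd_Re_quadform_ge0 (Q : 'M[R[i]]_L) h : psd Q -> 0 <= complex.Re (quadform Q h).
Proof. by case=> _ /(_ h); rewrite lecE => /andP[]. Qed.

Lemma unif_avg_ln_le (b : bstate L) (Q : 'M[R[i]]_L) (P : R) :
  0 <= P -> psd Q -> (forall l, Q l l <= P%:C) ->
  unif_avg L (fun th => ln (1 + complex.Re (quadform Q (hvec b th)))) <=
  ln (1 + (\sum_(l < L) (b l : nat))%:R * P).
Proof.
move=> P0 psdQ diagQ; set a := _ * P.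
have a0 : 0 <= a by rewrite mulr_ge0.
pose s := const_term (ln (1 + a)) ::
  map (scale_term (1 + a)^-1) (const_term (- a) :: quad_terms b Q).
have sum_s (F : sep_term R -> R) : (forall w p, F (scale_term w p) = w * F p) ->
    \sum_(p <- s) F p = F (const_term (ln (1 + a))) +
      (1 + a)^-1 * \sum_(p <- const_term (- a) :: quad_terms b Q) F p.
  by move=> FZ; rewrite big_cons big_map mulr_sumr; under eq_bigr do rewrite FZ.
apply: (@le_trans _ _ (\sum_(p <- s) term_mean L p)).
  apply: unif_avg_le_term_mean => t; first by rewrite ln_ge0 // lerDl psd_Re_quadform_ge0.
  rewrite /sepsum sum_s => [|w p]; last exact: term_value_scale.
  rewrite big_cons !term_value_const -/(sepsum L _ t) sepsum_quad_terms.
  have := psd_Re_quadform_ge0 (hvec b t) psdQ.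
  by rewrite [(1 + a)^-1 * _]mulrC [- a + _]addrC => X0; rewrite ln1D_le_tangent //; lra.
rewrite sum_s => [|w p]; last exact: term_mean_scale.
rewrite big_cons !term_mean_const term_mean_quad_terms gerDl pmulr_rle0 ?invr_gt0 ?ltr_pwDl //.
rewrite addrC subr_le0 /a natr_sum mulr_suml; apply: ler_sum => l _.
apply: ler_wpM2l; first by case: (b l).
by have := diagQ l; rewrite lecE => /andP[].
Qed.

Lemma psd_scalar (P : R) : 0 <= P -> psd (P%:C%:M : 'M[R[i]]_L).
Proof.
move=> P0; split.
  rewrite qualifE /= expr0 scale1r tr_scalar_mx map_scalar_mx /=.
  by apply/eqP; congr scalar_mx; symmetry; exact: conjc_real.
move=> v; rewrite mul_mx_scalar -scalemxAl mxE mulr_ge0 ?ler0c //.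
by rewrite mxE sumr_ge0 // => i _; rewrite !mxE mulrC mulcJ_ge0.
Qed.

Lemma Re_quadform_scalar (P : R) (b : bstate L) t :
  complex.Re (quadform (P%:C)%:M (hvec b t)) = (\sum_(l < L) (b l : nat))%:R * P.
Proof.
rewrite Re_quadformE natr_sum mulr_suml; apply: eq_bigr => j _.
rewrite (bigD1 j) //= big1 ?addr0 => [|i ij].
  by rewrite Re_hvec_diag mxE eqxx mulr1n.
by rewrite [(P%:C)%:M i j]mxE (negbTE ij) mulr0n mulr0 mul0r.
Qed.

Lemma ergodic_rate_scalar (P pB : R) :
  ergodic_rate pB (fun=> P%:C%:M : 'M[R[i]]_L) = rhs_rate L pB P.
Proof.
apply: eq_bigr => b _; congr (_ * _).
under eq_fun do rewrite Re_quadform_scalar.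
exact: unif_avg_cst.
Qed.

End Capacity.

Theorem proposition1 (R : realType) (L : nat) (P pB : R) :
  (1 <= L)%N -> 0 <= P -> 0 <= pB <= 1 ->
  sup [set @ergodic_rate R L pB Q | Q in [set Q | @admissible R L P Q]]
  = rhs_rate L pB P.
Proof.
move=> _ P0 /andP[pB0 pB1]; apply: sup_attained.
  exists (fun=> (P%:C)%C%:M); last exact: ergodic_rate_scalar.
  by move=> b; split => [|l]; [exact: psd_scalar | rewrite mxE eqxx mulr1n].
move=> _ [Q admQ <-]; apply: ler_sum => b _; apply: ler_wpM2l.
  by apply: prodr_ge0 => l _; case: (b l); rewrite ?subr_ge0.
by have [psdQ diagQ] := admQ b; exact: unif_avg_ln_le.
Qed.
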